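(* Let $1/n\ll \beta \ll\xi, \mu$. Let $K_{2n+1}$ be 2-factorized. Suppose that $V_0\subseteq V(K_{2n+1})$ and $D_0\subseteq C(K_{2n+1})$ are $\mu$-random subsets which are independent of each other. Then, with high probability, the following holds. Let $C,\bar{C}\subseteq C(K_{2n+1})$ and $X,\bar{V},Z\subseteq V(K_{2n+1})$ satisfy $|\bar{C}|,|\bar{V}|\leq \beta n$ and $|C|\leq 100$, and suppose that $X,Z$ are disjoint and $(X,Z)$ is $(\xi n)$-replete. Then there are sets $X'\subseteq X\setminus \bar{V}$, $C'\subseteq D_0\setminus \bar{C}$ and $V'\subseteq (V_0\cup Z)\setminus \bar{V}$ with $|X'|=|C|$, $|C'|=|C|-1$ and $|V'|\leq 3|C|$ such that, for every $c\in C$, there is a perfect $(C'\cup \{c\})$-rainbow matching from $X'$ to $V'$.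
   Context: A 2-factorization of $K_{2n+1}$ is an edge-colouring in which every vertex is incident to exactly 2 edges of each colour; $C(K_{2n+1})$ is its colour set. A $q$-random subset contains each element independently with probability $q$. For disjoint $W,Y$, $(W,Y)$ is $\ell$-replete if for every colour at least $\ell$ edges of that colour join $W$ to $Y$. A perfect $D$-rainbow matching from $X'$ to $V'$ is a matching covering every vertex of $X'$, each edge joining $X'$ to $V'$, with distinct colours all in $D$. ''With high probability'': probability $1-o(1)$ as $n\to\infty$. $a\ll b,c$ means the statement holds whenever $a\le \min(b,c)^K/K$ for a suitable fixed absolute constant $K$; $1/n\ll\cdots$ entails $n$ large. *)

From HB Require Import structures.
From mathcomp Require Import all_boot all_order all_algebra.
From mathcomp Require Import reals.
Set Implicit Arguments. Unset Strict Implicit. Unset Printing Implicit Defensive.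
Import Order.TTheory GRing.Theory Num.Theory.
Local Open Scope ring_scope.

(* Colours: 'I_n (a 2-factorization of
   K_{2n+1} has exactly n colour classes).  An edge-colouring is a function
   col : V -> V -> 'I_n, only its values on pairs u <> v matter. *)

Definition sym_colouring (V : finType) (k : nat) (col : V -> V -> 'I_k) : Prop :=
  forall u v : V, u != v -> col u v = col v u.

Definition two_factorization (V : finType) (k : nat) (col : V -> V -> 'I_k) : Prop :=
  sym_colouring col /\
  forall (v : V) (c : 'I_k), #|[set u : V | (u != v) && (col v u == c)]| = 2%N.

(* Edges from W to Y are counted as ordered pairs (w,y)
   with w in W, y in Y (for disjoint W, Y each edge is counted once). *)
Definition replete (R : realType) (V : finType) (k : nat) (col : V -> V -> 'I_k)
    (l : R) (W Y : {set V}) : Prop :=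
  forall c : 'I_k,
    l <= (#|[set e : V * V | [&& e.1 \in W, e.2 \in Y, e.1 != e.2 & col e.1 e.2 == c]]|)%:R.

Definition perfect_rainbow_matching (V : finType) (k : nat) (col : V -> V -> 'I_k)
    (D : {set 'I_k}) (X' V' : {set V}) (M : {set V * V}) : Prop :=
  [/\ (forall e, e \in M -> [&& e.1 \in X', e.2 \in V', e.1 != e.2 & col e.1 e.2 \in D]),
      (forall e f, e \in M -> f \in M -> e != f ->
        [disjoint [set e.1; e.2] & [set f.1; f.2]]),
      (forall e f, e \in M -> f \in M -> col e.1 e.2 = col f.1 f.2 -> e = f) &
      forall x, x \in X' -> exists2 e, e \in M & (x == e.1) || (x == e.2)].

Definition has_perfect_rainbow_matching (V : finType) (k : nat) (col : V -> V -> 'I_k)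
    (D : {set 'I_k}) (X' V' : {set V}) : Prop :=
  exists M, perfect_rainbow_matching col D X' V' M.

(* probability that a q-random subset of T equals S *)
Definition rand_weight (R : realType) (T : finType) (q : R) (S : {set T}) : R :=
  \prod_(t : T) (if t \in S then q else 1 - q).

Definition good_event (R : realType) (n : nat) (col : 'I_(2*n+1) -> 'I_(2*n+1) -> 'I_n)
    (beta xi : R) (V0 : {set 'I_(2*n+1)}) (D0 : {set 'I_n}) : Prop :=
  forall (C Cbar : {set 'I_n}) (X Vbar Z : {set 'I_(2*n+1)}),
    (#|Cbar|%:R <= beta * n%:R) -> (#|Vbar|%:R <= beta * n%:R) ->
    (#|C| <= 100)%N -> [disjoint X & Z] -> replete col (xi * n%:R) X Z ->
    exists (X' : {set 'I_(2*n+1)}) (C' : {set 'I_n}) (V' : {set 'I_(2*n+1)}),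
      [/\ X' \subset X :\: Vbar, C' \subset D0 :\: Cbar,
          V' \subset (V0 :|: Z) :\: Vbar,
          [/\ #|X'| = #|C|, #|C'| = (#|C| - 1)%N & (#|V'| <= 3 * #|C|)%N] &
          (forall c, c \in C -> has_perfect_rainbow_matching col (c |: C') X' V')].

From HB Require Import structures.
From mathcomp Require Import all_boot all_order all_algebra.
From mathcomp Require Import reals.
From mathcomp Require Import lra ring zify.
Import Order.TTheory GRing.Theory Num.Theory.
Set Implicit Arguments. Unset Strict Implicit. Unset Printing Implicit Defensive.
Local Open Scope ring_scope.

(* Call a colour d good for vertices h, x if d \in D0 and the four colour-d
   neighbours of h and x lie in V0.  Each colour is good with probability at least
   mu^5, and its event is independent of all but at most 8 others, so the number of
   good colours has mean at least n mu^5 and variance at most 8n.  By Chebyshev and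
   Markov, with high probability at most xi^2 n^2 / 128 pairs (h, x) have fewer than
   n mu^5 / 2 good colours.  In that event the sets are built greedily: fix cm \in C
   and an X-Z edge h zm of colour cm such that h has few such bad partners x; for
   every other c \in C take a fresh X-Z edge x_c z_c of colour c with (h, x_c) not
   bad, a fresh colour d_c good for (h, x_c), and colour-d_c neighbours u_c of h and
   w_c of x_c.  Then X' = {h, x_c}, C' = {d_c}, V' = {zm, z_c, u_c, w_c}; the
   matching for cm is h zm together with all x_c w_c, and the matching for c0 <> cm
   uses x_c0 z_c0 and h u_c0 instead of h zm and x_c0 w_c0. *)

Section Expectation.
Variables (R : realType) (T : finType) (w : T -> R).

Definition expect (f : T -> R) : R := \sum_p w p * f p.

Lemma eq_expect f g : f =1 g -> expect f = expect g.
Proof. by move=> fg; apply: eq_bigr => p _; rewrite fg. Qed.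

Lemma expect_cst c : expect (fun=> c) = (\sum_p w p) * c.
Proof. by rewrite /expect mulr_suml. Qed.

Lemma expectD f g : expect (fun p => f p + g p) = expect f + expect g.
Proof. by rewrite /expect -big_split; apply: eq_bigr => p _; rewrite mulrDr. Qed.

Lemma expectZ c f : expect (fun p => c * f p) = c * expect f.
Proof. by rewrite /expect mulr_sumr; apply: eq_bigr => p _; rewrite mulrCA. Qed.

Lemma expect_sum (I : finType) (F : I -> T -> R) :
  expect (fun p => \sum_i F i p) = \sum_i expect (F i).
Proof. by rewrite /expect exchange_big; apply: eq_bigr => p _; rewrite mulr_sumr. Qed.

Lemma expect_centered_mul f g : \sum_p w p = 1 ->
  expect (fun p => (f p - expect f) * (g p - expect g)) =
  expect (fun p => f p * g p) - expect f * expect g.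
Proof.
move=> w1; set a := expect f; set b := expect g.
rewrite (@eq_expect _ (fun p => f p * g p + ((- b) * f p + ((- a) * g p + a * b)))).
  by rewrite !expectD !expectZ expect_cst w1; rewrite -/a -/b; ring.
by move=> p; ring.
Qed.

Lemma expect_sqr_sum_centered (I : finType) (F : I -> T -> R) : \sum_p w p = 1 ->
  expect (fun p => (\sum_i F i p - \sum_i expect (F i)) ^+ 2) =
  \sum_i \sum_j (expect (fun p => F i p * F j p) - expect (F i) * expect (F j)).
Proof.
move=> w1; rewrite (@eq_expect _ (fun p => \sum_i \sum_j
   (F i p - expect (F i)) * (F j p - expect (F j)))).
  rewrite expect_sum; apply: eq_bigr => i _; rewrite expect_sum.
  by apply: eq_bigr => j _; rewrite expect_centered_mul.
by move=> p; rewrite -sumrB expr2 big_distrl; apply: eq_bigr => i _; rewrite big_distrr.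
Qed.

Hypothesis w_ge0 : forall p, 0 <= w p.

Lemma ler_expect f g : (forall p, f p <= g p) -> expect f <= expect g.
Proof. by move=> fg; apply: ler_sum => p _; rewrite ler_wpM2l. Qed.

Lemma markov f t : 0 < t -> (forall p, 0 <= f p) ->
  \sum_(p in [set p | t < f p]) w p <= expect f / t.
Proof.
move=> t0 f0; rewrite /expect mulr_suml big_mkcond /=.
apply: ler_sum => p _; rewrite inE -mulrA.
case: ifP => [ft | _]; last by rewrite mulr_ge0 // divr_ge0 // ltW.
by rewrite ler_peMr // ler_pdivlMr // mul1r ltW.
Qed.

Lemma chebyshev_lower (f : T -> R) (a t : R) : t < a ->
  expect (fun p => (f p < t)%R%:R) <= expect (fun p => (f p - a) ^+ 2) / (a - t) ^+ 2.
Proof.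
move=> ta; have d0 : 0 < (a - t) ^+ 2 by rewrite exprn_gt0 // subr_gt0.
rewrite ler_pdivlMr // mulrC -expectZ; apply: ler_expect => p.
case: ltrP => [ft | _]; last by rewrite mulr0 sqr_ge0.
rewrite mulr1; nra.
Qed.

End Expectation.

Section RandomSubsets.
Variable R : realType.

Lemma rand_weight_ge0 (T : finType) (q : R) (S : {set T}) :
  0 <= q -> q <= 1 -> 0 <= rand_weight q S.
Proof.
move=> q0 q1; apply: prodr_ge0 => t _.
by case: (t \in S); rewrite ?subr_ge0.
Qed.

Lemma prod_indicator_subset (T : finType) (A J : {set T}) :
  \prod_(t : T) (if t \in J then 1 else (t \notin A)%:R) = (A \subset J)%:R :> R.
Proof.
have [sAJ | /subsetPn [t tA tJ]] := boolP (A \subset J).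
  apply: big1 => t _; case: ifPn => // tJ.
  by rewrite (contraNN (subsetP sAJ t) tJ).
by rewrite (bigD1 t) //= (negbTE tJ) tA mul0r.
Qed.

(* Expanding [\prod_t (q + (1 - q) [t \notin A])] over the subsets [J] of [T]. *)
Lemma sum_rand_weight_subset (T : finType) (q : R) (A : {set T}) :
  \sum_(S : {set T}) rand_weight q S * (A \subset S)%:R = q ^+ #|A|.
Proof.
have -> : q ^+ #|A| = \prod_(t : T) (q + (1 - q) * (t \notin A)%:R).
  rewrite (bigID (mem A)) /= [X in _ * X]big1 ?mulr1; last first.
    by move=> t /negbTE ->; rewrite mulr1 addrC subrK.
  by rewrite -prodr_const; apply: eq_bigr => t ->; rewrite mulr0 addr0.
rewrite bigA_distr; apply: eq_bigr => J _.
rewrite /rand_weight -prod_indicator_subset -big_split /=; apply: eq_bigr => t _.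
by case: (t \in J); rewrite ?mulr1.
Qed.

Section PairWeight.
Variables (T1 T2 : finType) (q : R).

Definition pair_weight (p : {set T1} * {set T2}) : R :=
  rand_weight q p.1 * rand_weight q p.2.

Lemma pair_weight_ge0 p : 0 <= q -> q <= 1 -> 0 <= pair_weight p.
Proof. by move=> q0 q1; rewrite mulr_ge0 ?rand_weight_ge0. Qed.

Lemma expect_pair_subset (A : {set T1}) (B : {set T2}) :
  expect pair_weight (fun p => ((A \subset p.1) && (B \subset p.2))%:R) =
  q ^+ #|A| * q ^+ #|B|.
Proof.
rewrite -(sum_rand_weight_subset q A) -(sum_rand_weight_subset q B) mulr_suml.
under eq_bigr do rewrite mulr_sumr.
rewrite pair_bigA; apply: eq_bigr => -[S1 S2] _.
by rewrite /pair_weight -mulnb natrM /=; ring.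
Qed.

Lemma sum_pair_weight : \sum_p pair_weight p = 1.
Proof.
have := expect_pair_subset set0 set0; rewrite !cards0 expr0 mulr1 /expect => <-.
by apply: eq_bigr => p _; rewrite !sub0set mulr1.
Qed.

End PairWeight.
End RandomSubsets.

Section TwoFactorization.
Variables (V : finType) (k : nat) (col : V -> V -> 'I_k).
Hypothesis tf : two_factorization col.

Definition nbhd (v : V) (d : 'I_k) : {set V} := [set u | (u != v) && (col v u == d)].

Lemma card_nbhd v d : #|nbhd v d| = 2%N.
Proof. by case: tf => _ ->. Qed.

Lemma nbhd_col v d u : u \in nbhd v d -> col v u = d.
Proof. by rewrite inE => /andP [_ /eqP]. Qed.

Lemma nbhd_disjoint v d (F : {set V}) : d \notin col v @: F -> [disjoint nbhd v d & F].
Proof.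
move=> dF; apply/pred0P => u /=; apply: negbTE; apply: contra dF => /andP [/nbhd_col <-].
exact: imset_f.
Qed.

Lemma exists_nbhd_neq v d u : exists2 w, w \in nbhd v d & w != u.
Proof.
have : (0 < #|nbhd v d :\ u|)%N.
  by have := cardsD1 u (nbhd v d); rewrite card_nbhd; case: (u \in _) => /=; lia.
by case/card_gt0P => w; rewrite in_setD1 => /andP [wu wN]; exists w.
Qed.

Definition nbhd2 (h x : V) (d : 'I_k) : {set V} := nbhd h d :|: nbhd x d.

Lemma card_nbhd2 h x d : (#|nbhd2 h x d| <= 4)%N.
Proof. by rewrite (leq_trans (leq_card_setU _ _)) // !card_nbhd. Qed.

Lemma nbhd2_neq0 h x d : nbhd2 h x d != set0.
Proof. by rewrite -card_gt0 (leq_trans _ (subset_leq_card (subsetUl _ _))) ?card_nbhd. Qed.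

(* A vertex [v] of [nbhd2 h x d'] determines [d'] as [col h v] or [col x v]. *)
Lemma card_nbhd2_meeting h x d :
  (#|[set d' | ~~ [disjoint nbhd2 h x d & nbhd2 h x d']]| <= 8)%N.
Proof.
set W := nbhd2 h x d.
have sub : [set d' | ~~ [disjoint W & nbhd2 h x d']] \subset col h @: W :|: col x @: W.
  apply/subsetP => d'; rewrite inE => /pred0Pn [v /andP [vW /setUP [] /nbhd_col <-]].
  - by rewrite inE imset_f.
  - by rewrite inE imset_f ?orbT.
apply: leq_trans (subset_leq_card sub) _; apply: leq_trans (leq_card_setU _ _) _.
have : (#|W| <= 4)%N := card_nbhd2 h x d.
by have := leq_imset_card (col h) W; have := leq_imset_card (col x) W; lia.
Qed.

Definition good_colour (h x : V) (d : 'I_k) (p : {set V} * {set 'I_k}) : bool :=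
  (nbhd2 h x d \subset p.1) && (d \in p.2).

Definition good_colours h x p := [set d | good_colour h x d p].

Definition bad_pair (R : realType) (mu : R) h x p : bool :=
  #|good_colours h x p|%:R < k%:R * mu ^+ 5 / 2.

Section GoodColourCount.
Variables (R : realType) (mu : R) (h x : V).
Hypotheses (mu_gt0 : 0 < mu) (mu_le1 : mu <= 1).
Let mu_ge0 : 0 <= mu := ltW mu_gt0.

Local Notation E := (expect (@pair_weight R V 'I_k mu)).
Local Notation ind d := (fun p => (good_colour h x d p)%:R : R).

Lemma expect_good_colour d : E (ind d) = mu ^+ #|nbhd2 h x d| * mu.
Proof.
have := expect_pair_subset mu (nbhd2 h x d) [set d]; rewrite cards1 expr1 => <-.
by apply: eq_expect => p; rewrite /good_colour sub1set.
Qed.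

Lemma expect_good_colour2 d d' : E (fun p => ind d p * ind d' p) =
  mu ^+ #|nbhd2 h x d :|: nbhd2 h x d'| * mu ^+ #|[set d; d']|.
Proof.
rewrite -expect_pair_subset; apply: eq_expect => p.
rewrite -natrM mulnb (subUset _ (nbhd2 h x d)) (subUset _ [set d]) !sub1set.
by rewrite /good_colour andbACA.
Qed.

(* Good colours whose neighbourhoods are disjoint are independent events. *)
Lemma cov_good_colour d d' : E (fun p => ind d p * ind d' p) - E (ind d) * E (ind d')
  <= (~~ [disjoint nbhd2 h x d & nbhd2 h x d'])%:R.
Proof.
have [dis | _] := boolP [disjoint _ & _] => /=; last first.
  have : 0 <= E (ind d) * E (ind d') by rewrite !expect_good_colour !mulr_ge0 ?exprn_ge0.
  have : E (fun p => ind d p * ind d' p) <= 1.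
    by rewrite expect_good_colour2 mulr_ile1 ?exprn_ile1 ?exprn_ge0.
  lra.
have dd' : d != d'.
  by apply: contraTneq dis => <-; rewrite -setI_eq0 setIid nbhd2_neq0.
rewrite expect_good_colour2 !expect_good_colour cards2 dd' cardsU (disjoint_setI0 dis).
by rewrite cards0 subn0 exprD expr2 [X in X <= _](_ : _ = 0) //; ring.
Qed.

Lemma card_good_colours p : #|good_colours h x p|%:R = \sum_d ind d p.
Proof.
by rewrite -sum1_card natr_sum big_mkcond; apply: eq_bigr => d _; rewrite inE; case: ifP.
Qed.

Lemma mean_good_colours_ge : k%:R * mu ^+ 5 <= \sum_d E (ind d).
Proof.
apply: (@le_trans _ _ (\sum_(d : 'I_k) mu ^+ 4 * mu)).
  by rewrite sumr_const card_ord mulr_natl -exprSr.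
by apply: ler_sum => d _; rewrite expect_good_colour ler_wpM2r // ler_wiXn2l // card_nbhd2.
Qed.

Lemma var_good_colours :
  E (fun p => (#|good_colours h x p|%:R - \sum_d E (ind d)) ^+ 2) <= (8 * k)%:R.
Proof.
under eq_expect do rewrite card_good_colours.
rewrite expect_sqr_sum_centered ?sum_pair_weight //.
apply: (@le_trans _ _ (\sum_(d : 'I_k) 8%:R)); last first.
  by rewrite sumr_const card_ord natrM mulr_natr.
apply: ler_sum => d _.
apply: le_trans (_ : _ <= \sum_d' (~~ [disjoint nbhd2 h x d & nbhd2 h x d'])%:R) _.
  by apply: ler_sum => d' _; apply: cov_good_colour.
rewrite -natr_sum ler_nat (leq_trans _ (card_nbhd2_meeting h x d)) //.
by rewrite -sum1_card [X in (_ <= X)%N]big_mkcond; apply: leq_sum => d' _; rewrite inE; case: ifP.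
Qed.

Lemma expect_bad_pair : (0 < k)%N ->
  E (fun p => (bad_pair mu h x p)%:R) <= 32 / (k%:R * mu ^+ 10).
Proof.
move=> k_gt0; set a := \sum_d E (ind d); set m := k%:R * mu ^+ 5.
have m_gt0 : 0 < m by rewrite mulr_gt0 ?ltr0n ?exprn_gt0.
have am := mean_good_colours_ge; rewrite -/a -/m in am.
have cm : 32 / (k%:R * mu ^+ 10) * (m / 2) ^+ 2 = (8 * k)%:R.
  by rewrite /m natrM; field; rewrite gt_eqF // pnatr_eq0 -lt0n.
have c_gt0 : 0 < 32 / (k%:R * mu ^+ 10) by rewrite divr_gt0 ?mulr_gt0 ?ltr0n ?exprn_gt0.
have w_ge0 (p : {set V} * {set 'I_k}) : 0 <= pair_weight mu p by exact: pair_weight_ge0.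
have ma : m / 2 < a by lra.
apply: le_trans (chebyshev_lower w_ge0 (fun p => #|good_colours h x p|%:R) ma) _.
rewrite ler_pdivrMr; last by rewrite exprn_gt0 // subr_gt0.
apply: le_trans var_good_colours _; rewrite -cm -/a.
by apply: ler_wpM2l; [exact: ltW | rewrite ler_sqr ?nnegrE; lra].
Qed.

End GoodColourCount.

Definition bad_partners (R : realType) (mu : R) h p := [set x | bad_pair mu h x p].

Definition nbad (R : realType) (mu : R) p : nat := \sum_h #|bad_partners mu h p|.

Lemma expect_nbad (R : realType) (mu : R) : 0 < mu -> mu <= 1 -> (0 < k)%N ->
  expect (pair_weight mu) (fun p => (nbad mu p)%:R) <=
  #|V|%:R ^+ 2 * (32 / (k%:R * mu ^+ 10)).
Proof.
move=> mu_gt0 mu_le1 k_gt0.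
rewrite (@eq_expect _ _ _ _ (fun p => \sum_h \sum_x (bad_pair mu h x p)%:R)); last first.
  move=> p; rewrite /nbad natr_sum; apply: eq_bigr => h _.
  by rewrite -sum1_card natr_sum big_mkcond; apply: eq_bigr => x _; rewrite inE; case: ifP.
rewrite [X in _ <= X](_ : _ = \sum_(h : V) \sum_(x : V) 32 / (k%:R * mu ^+ 10)); last first.
  by rewrite expr2 -natrM mulr_natl !sumr_const -mulrnA.
rewrite expect_sum; apply: ler_sum => h _; rewrite expect_sum; apply: ler_sum => x _.
exact: expect_bad_pair.
Qed.

End TwoFactorization.

Lemma card_le_fibres (T U : finType) (f : T -> U) (A : {set T}) (m : nat) :
  (forall y, #|[set x in A | f x == y]| <= m)%N -> (#|A| <= #|f @: A| * m)%N.
Proof.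
move=> fib; rewrite -sum1_card (partition_big f (mem (f @: A))) /=; last first.
  by move=> x xA; apply: imset_f.
rewrite -sum_nat_const; apply: leq_sum => y _; apply: leq_trans (fib y).
by rewrite -sum1_card; apply: eq_leq; apply: eq_bigl => x; rewrite inE.
Qed.

Lemma perfect_rainbow_matching_imset (V : finType) (k : nat) (col : V -> V -> 'I_k)
    (D : {set 'I_k}) (X' V' : {set V}) (I : finType) (A : {set I}) (e : I -> V * V) :
  (forall i, i \in A ->
     [&& (e i).1 \in X', (e i).2 \in V', (e i).1 != (e i).2 & col (e i).1 (e i).2 \in D]) ->
  (forall i j, i \in A -> j \in A -> i != j ->
     [disjoint [set (e i).1; (e i).2] & [set (e j).1; (e j).2]]) ->
  {in A &, injective (fun i => col (e i).1 (e i).2)} ->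
  X' \subset [set (e i).1 | i in A] ->
  has_perfect_rainbow_matching col D X' V'.
Proof.
move=> eA edis ecol X'A; exists (e @: A); split.
- by move=> _ /imsetP [i iA ->]; apply: eA.
- move=> _ _ /imsetP [i iA ->] /imsetP [j jA ->] eij.
  by apply: edis => //; apply: contra_neq eij => ->.
- by move=> _ _ /imsetP [i iA ->] /imsetP [j jA ->] /ecol -> //.
- move=> x /(subsetP X'A) /imsetP [i iA ->].
  by exists (e i); rewrite ?imset_f ?eqxx.
Qed.

Lemma disjoint_set2_inj (T U : finType) (f : T -> U) (D : {set T}) (a b a' b' : T) :
  {in D &, injective f} -> a \in D -> b \in D -> a' \in D -> b' \in D ->
  [disjoint [set a; b] & [set a'; b']] -> [disjoint [set f a; f b] & [set f a'; f b']].
Proof.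
move=> finj aD bD a'D b'D dis.
have fneq x y : x \in [set a; b] -> y \in [set a'; b'] -> f x != f y.
  move=> xab ya'b'; have xD : x \in D by case/set2P: xab => ->.
  have yD : y \in D by case/set2P: ya'b' => ->.
  rewrite (inj_in_eq finj) //; apply: contraTneq dis => xy.
  by apply/pred0Pn; exists y; rewrite /= ya'b' -xy xab.
apply/pred0P => v /=; apply/negbTE/negP; rewrite !inE.
by case/andP => /orP [] /eqP -> /orP [] /eqP/eqP; apply/negP/fneq; rewrite !inE eqxx ?orbT.
Qed.

Lemma leq_card_setU3 (T : finType) (A B C : {set T}) :
  (#|A :|: B :|: C| <= #|A| + #|B| + #|C|)%N.
Proof. by apply: leq_trans (leq_card_setU _ _).1 _; rewrite leq_add2r (leq_card_setU _ _).1. Qed.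

Definition slot_x : 'I_4 := @Ordinal 4 0 isT.
Definition slot_z : 'I_4 := @Ordinal 4 1 isT.
Definition slot_u : 'I_4 := @Ordinal 4 2 isT.
Definition slot_w : 'I_4 := @Ordinal 4 3 isT.

Lemma slot_cases (i : 'I_4) : i != slot_x -> [\/ i = slot_z, i = slot_u | i = slot_w].
Proof.
case: i => [[|[|[|[|i]]]] ?] // _; [apply: Or31 | apply: Or32 | apply: Or33]; exact: val_inj.
Qed.

Section Construction.
Variables (R : realType) (V : finType) (k : nat) (col : V -> V -> 'I_k).
Hypothesis tf : two_factorization col.
Variables (xi mu beta : R) (V0 : {set V}) (D0 : {set 'I_k}).
(* [4000] absorbs the additive constants of the greedy choices below: at most 400
   used vertices and 1000 further forbidden colours. *)
Hypotheses (beta_xi : beta <= xi / 64) (beta_mu : beta <= mu ^+ 5 / 64)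
  (xi_k : 4000 <= xi * k%:R) (mu_k : 4000 <= mu ^+ 5 * k%:R)
  (few_bad_pairs : (nbad col mu (V0, D0))%:R <= xi ^+ 2 / 128 * k%:R ^+ 2).
Variables (C Cbar : {set 'I_k}) (X Vbar Z : {set V}).
Hypotheses (Cbar_small : #|Cbar|%:R <= beta * k%:R) (Vbar_small : #|Vbar|%:R <= beta * k%:R)
  (C_small : (#|C| <= 100)%N) (XZ_replete : replete col (xi * k%:R) X Z).

Let beta_k_xi : beta * k%:R <= xi * k%:R / 64.
Proof. by rewrite mulrAC ler_wpM2r. Qed.

Let beta_k_mu : beta * k%:R <= mu ^+ 5 * k%:R / 64.
Proof. by rewrite mulrAC ler_wpM2r. Qed.

Definition colour_edges c :=
  [set e : V * V | [&& e.1 \in X, e.2 \in Z, e.1 != e.2 & col e.1 e.2 == c]].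

(* A vertex has two neighbours of colour [c], hence is the first end of at most two
   edges of [colour_edges c] and the second end of at most two. *)
Lemma card_colour_edges_meeting (W : {set V}) c :
  (#|[set e in colour_edges c | (e.1 \in W) || (e.2 \in W)]| <= 4 * #|W|)%N.
Proof.
have half (g : V * V -> V) (pr : V -> V -> V * V) :
    (forall e, e \in colour_edges c -> exists2 u, u \in nbhd col (g e) c & e = pr (g e) u) ->
    (#|[set e in colour_edges c | g e \in W]| <= #|W| * 2)%N.
  move=> ge; apply: leq_trans (@card_le_fibres _ _ g _ 2 _) _; last first.
    apply: leq_mul => //; apply/subset_leq_card/subsetP => v /imsetP [e].
    by rewrite inE => /andP [_ eW] ->.
  move=> v; rewrite -(card_nbhd tf v c); apply: leq_trans (leq_imset_card (pr v) _).
  apply/subset_leq_card/subsetP => e; rewrite 2!inE => /andP [/andP [eE _] /eqP gev].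
  by case: (ge e eE) => u; rewrite gev => uN ->; apply: imset_f.
have fst_part := half fst pair.
have snd_part := half snd (fun v u => (u, v)).
have sub : [set e in colour_edges c | (e.1 \in W) || (e.2 \in W)] \subset
    [set e in colour_edges c | e.1 \in W] :|: [set e in colour_edges c | e.2 \in W].
  apply/subsetP => e; rewrite in_setU !(in_set (fun e => (e \in colour_edges c) && _)).
  by case/andP => -> /orP [] ->; rewrite ?orbT.
apply: leq_trans (subset_leq_card sub) _; apply: leq_trans (leq_card_setU _ _) _.
suff: (#|[set e in colour_edges c | e.1 \in W]| <= #|W| * 2 /\
       #|[set e in colour_edges c | e.2 \in W]| <= #|W| * 2)%N.
  by case=> le1 le2; apply: leq_trans (leq_add le1 le2) _; rewrite -mulnDr mulnC.
split; [apply: fst_part | apply: snd_part] => -[x z];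
  rewrite inE /= => /and4P [_ _ xz /eqP xzc]; [exists z | exists x] => //.
- by rewrite /nbhd inE (eq_sym z) xz xzc eqxx.
- by rewrite /nbhd inE xz -xzc (proj1 tf z x) ?eqxx // eq_sym.
Qed.

Lemma exists_fresh_edge (W : {set V}) c : 4 * #|W|%:R < xi * k%:R ->
  exists x z, [/\ (x, z) \in colour_edges c, x \notin W & z \notin W].
Proof.
move=> Wsmall; have : ~~ (colour_edges c \subset
    [set e in colour_edges c | (e.1 \in W) || (e.2 \in W)]).
  apply: contraTN Wsmall => /subset_leq_card/leq_trans/(_ (card_colour_edges_meeting W c)).
  rewrite -(ler_nat R) natrM -leNgt => /(le_trans (XZ_replete c)).
  by rewrite /colour_edges.
case/subsetPn => -[x z] xz; rewrite inE xz negb_or => /andP [xW zW].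
by exists x, z.
Qed.

Let bad_of h := bad_partners col mu h (V0, D0).

Definition bad_hubs := [set h | xi * k%:R / 16 <= #|bad_of h|%:R].

Lemma card_bad_hubs : #|bad_hubs|%:R <= xi * k%:R / 8.
Proof.
have t_gt0 : 0 < xi * k%:R / 16 by rewrite divr_gt0 // (lt_le_trans _ xi_k).
have : #|bad_hubs|%:R * (xi * k%:R / 16) <= (xi * k%:R / 8) * (xi * k%:R / 16).
  have -> : xi * k%:R / 8 * (xi * k%:R / 16) = xi ^+ 2 / 128 * k%:R ^+ 2 by field.
  apply: le_trans few_bad_pairs; rewrite /nbad natr_sum (bigID (mem bad_hubs)) /=.
  rewrite -[X in X <= _]addr0 lerD ?sumr_ge0 // mulr_natl -sumr_const.
  by apply: ler_sum => h; rewrite inE.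
by rewrite ler_pM2r.
Qed.

Lemma exists_hub_edge c : exists h z,
  [/\ (h, z) \in colour_edges c, h \notin Vbar :|: bad_hubs & z \notin Vbar :|: bad_hubs].
Proof.
apply: exists_fresh_edge; apply: (@le_lt_trans _ _ (4 * (#|Vbar|%:R + #|bad_hubs|%:R))).
  by rewrite ler_wpM2l // -natrD ler_nat leq_card_setU.
have := card_bad_hubs; have := beta_k_xi; move: Vbar_small xi_k.
(* [lra] only accepts the product [xi * k%:R] once it is named. *)
set xk := xi * k%:R; lra.
Qed.

Lemma exists_good_colour_avoiding h x (Ex : {set 'I_k}) : ~~ bad_pair col mu h x (V0, D0) ->
  (#|Ex| <= 1000 + #|Cbar| + 2 * #|Vbar|)%N ->
  exists2 d, d \in good_colours col h x (V0, D0) & d \notin Ex.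
Proof.
rewrite /bad_pair -leNgt [k%:R * _]mulrC => many_good Ex_small.
apply/subsetPn/negP => /subset_leq_card/leq_trans/(_ Ex_small).
rewrite -(ler_nat R) !natrD; move: many_good Cbar_small Vbar_small beta_k_mu mu_k.
set m := mu ^+ 5 * k%:R; set bk := beta * k%:R; lra.
Qed.

Lemma card_forbidden_colours (S : {set 'I_k}) (F : {set V}) (d : 'I_k -> 'I_k)
    (g g' : V -> 'I_k) :
  (#|S| <= 99)%N -> (#|F| <= #|Vbar| + 400)%N ->
  (#|C :|: Cbar :|: d @: S :|: g @: F :|: g' @: F| <= 1000 + #|Cbar| + 2 * #|Vbar|)%N.
Proof.
move=> S_small F_small.
have gF_small (g'' : V -> 'I_k) : (#|g'' @: F| <= #|Vbar| + 400)%N.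
  exact: leq_trans (leq_imset_card _ _) F_small.
apply: leq_trans (leq_card_setU3 _ _ _) _.
rewrite (_ : 1000 + _ + _ = 100 + #|Cbar| + 99 + (#|Vbar| + 400) + (#|Vbar| + 400) + 1)%N;
  last by clear; lia.
apply: leq_trans _ (leq_addr 1 _); apply: leq_add; [apply: leq_add|]; rewrite ?gF_small //.
apply: leq_trans (leq_card_setU3 _ _ _) _; apply: leq_add; [apply: leq_add|] => //.
exact: leq_trans (leq_imset_card _ _) S_small.
Qed.

Definition absorber (X' : {set V}) (C' : {set 'I_k}) (V' : {set V}) :=
  [/\ X' \subset X :\: Vbar, C' \subset D0 :\: Cbar, V' \subset (V0 :|: Z) :\: Vbar,
    [/\ #|X'| = #|C|, #|C'| = (#|C| - 1)%N & (#|V'| <= 3 * #|C|)%N] &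
    forall c, c \in C -> has_perfect_rainbow_matching col (c |: C') X' V'].

Section Gadget.
Variables (cm : 'I_k) (h zm : V).
Hypotheses (cm_C : cm \in C) (hzm_edge : (h, zm) \in colour_edges cm)
  (h_fresh : h \notin Vbar :|: bad_hubs) (zm_fresh : zm \notin Vbar :|: bad_hubs).

Definition Crest := C :\ cm.

(* [f (c, slot_x)], [f (c, slot_z)], [f (c, slot_u)], [f (c, slot_w)] and [d c] are
   x_c, z_c, u_c, w_c and d_c; [h] and [zm] sit at [(cm, slot_x)] and [(cm, slot_z)]. *)
Definition gadget_dom (S : {set 'I_k}) : {set 'I_k * 'I_4} :=
  setX S setT :|: [set (cm, slot_x); (cm, slot_z)].

Definition gadget (S : {set 'I_k}) (f : 'I_k * 'I_4 -> V) (d : 'I_k -> 'I_k) :=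
  [/\ {in gadget_dom S &, injective f}, f (cm, slot_x) = h /\ f (cm, slot_z) = zm,
    (forall c, c \in S -> [/\ f (c, slot_x) \in X :\: Vbar, f (c, slot_z) \in Z :\: Vbar,
       f (c, slot_u) \in V0 :\: Vbar & f (c, slot_w) \in V0 :\: Vbar]),
    (forall c, c \in S -> [/\ col (f (c, slot_x)) (f (c, slot_z)) = c,
       col h (f (c, slot_u)) = d c, col (f (c, slot_x)) (f (c, slot_w)) = d c,
       d c \in D0 :\: Cbar & d c \notin C]) &
    {in S &, injective d}].

Lemma in_gadget_dom S q :
  (q \in gadget_dom S) = (q.1 \in S) || (q \in [set (cm, slot_x); (cm, slot_z)]).
Proof. by case: q => a b; rewrite !inE andbT. Qed.

Lemma card_gadget_dom S : (#|gadget_dom S| <= 4 * #|S| + 2)%N.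
Proof.
apply: leq_trans (leq_card_setU _ _).1 _; rewrite cardsX cardsT card_ord cards2 mulnC.
by rewrite leq_add2l ltnS leq_b1.
Qed.

Lemma card_Crest : #|Crest| = (#|C| - 1)%N.
Proof. by rewrite (cardsD1 cm C) cm_C add1n subn1. Qed.

Lemma gadget0 : gadget set0 (fun q => if q.2 == slot_x then h else zm) id.
Proof.
move: hzm_edge; rewrite inE /= => /and4P [_ _ hzm _].
split=> [q q' | // | c | c | c]; rewrite ?in_set0 //.
rewrite !in_gadget_dom !inE /= => /orP [] /eqP -> /orP [] /eqP -> //= hz.
- by rewrite hz eqxx in hzm.
- by rewrite hz eqxx in hzm.
Qed.

Section Extend.
Variables (S : {set 'I_k}) (f : 'I_k * 'I_4 -> V) (d : 'I_k -> 'I_k) (c : 'I_k).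
Variables (x z u w : V) (dc : 'I_k).
Hypotheses (gS : gadget S f d) (cS : c \notin S) (c_cm : c != cm).
Hypotheses (xzuw_uniq : uniq [:: x; z; u; w])
  (xzuw_fresh : forall v, v \in [:: x; z; u; w] -> v \notin Vbar :|: f @: gadget_dom S)
  (xz_edge : (x, z) \in colour_edges c) (u_V0 : u \in V0) (w_V0 : w \in V0)
  (hu_col : col h u = dc) (xw_col : col x w = dc)
  (dc_D0 : dc \in D0 :\: Cbar) (dc_C : dc \notin C) (dc_S : dc \notin d @: S).

Let f' (q : 'I_k * 'I_4) := if q.1 == c then nth x [:: x; z; u; w] q.2 else f q.
Let d' e := if e == c then dc else d e.

Lemma gadget_extend : gadget (c |: S) f' d'.
Proof.
case: gS => finj [fh fzm] fmem fcol dinj.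
have neq_c e : e \in S -> (e == c) = false by move=> eS; apply: contraNF cS => /eqP <-.
have new_fresh (i : 'I_4) : nth x [:: x; z; u; w] i \notin f @: gadget_dom S.
  have /xzuw_fresh : nth x [:: x; z; u; w] i \in [:: x; z; u; w] by rewrite mem_nth ?ltn_ord.
  by rewrite inE negb_or => /andP [].
move: xz_edge; rewrite inE /= => /and4P [xX zZ xz /eqP xzc].
have notVbar v : v \in [:: x; z; u; w] -> v \notin Vbar.
  by move=> /xzuw_fresh; rewrite inE negb_or => /andP [].
split.
- have dom_new q : q \in gadget_dom (c |: S) -> (q.1 == c) || (q \in gadget_dom S).
    by rewrite !in_gadget_dom in_setU1 -orbA.
  move=> q q' /dom_new qD /dom_new q'D; rewrite /f'.
  case: eqP qD => [qc _ | qc /= qD]; case: eqP q'D => [q'c _ | q'c /= q'D].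
  + move/eqP; rewrite nth_uniq // => /eqP/val_inj.
    by case: q q' qc q'c => a b [a' b'] /= -> -> ->.
  + by move=> fq; have := new_fresh q.2; rewrite fq imset_f.
  + by move=> fq; have := new_fresh q'.2; rewrite -fq imset_f.
  + exact: finj.
- by rewrite /f' /= eq_sym (negbTE c_cm).
- move=> e; rewrite in_setU1 => /orP [/eqP -> | eS].
    by rewrite /f' /= eqxx /= !inE xX zZ u_V0 w_V0 !notVbar ?inE ?eqxx ?orbT.
  by rewrite /f' /= neq_c //; apply: fmem.
- move=> e; rewrite in_setU1 => /orP [/eqP -> | eS].
    by rewrite /f' /d' /= eqxx /= xzc hu_col xw_col dc_D0.
  by rewrite /f' /d' /= neq_c //; apply: fcol.
- move=> a b; rewrite !in_setU1 /d' => /orP [/eqP -> | aS] /orP [/eqP -> | bS] //.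
  + by rewrite eqxx neq_c // => dcb; move: dc_S; rewrite dcb imset_f.
  + by rewrite eqxx neq_c // => dca; move: dc_S; rewrite -dca imset_f.
  + by rewrite !neq_c //; apply: dinj.
Qed.

End Extend.

Lemma card_Crest_sub (S : {set 'I_k}) : S \subset Crest -> (#|S| <= 99)%N.
Proof. by move/subset_leq_card/leq_trans; apply; rewrite card_Crest leq_subLR. Qed.

Lemma exists_edge_good_for_hub (W : {set V}) c : (#|W| <= 398)%N ->
  exists x z, [/\ (x, z) \in colour_edges c,
    x \notin Vbar :|: W :|: bad_of h & z \notin Vbar :|: W :|: bad_of h].
Proof.
move=> W_small; apply: exists_fresh_edge.
have : #|bad_of h|%:R < xi * k%:R / 16.
  by move: h_fresh; rewrite !inE negb_or ltNge => /andP [].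
have : (#|Vbar :|: W :|: bad_of h| <= #|Vbar| + 398 + #|bad_of h|)%N.
  by apply: leq_trans (leq_card_setU3 _ _ _) _; rewrite leq_add2r leq_add2l.
rewrite -(ler_nat R) !natrD; move: Vbar_small beta_k_xi xi_k.
set xk := xi * k%:R; lra.
Qed.

Lemma gadget_step S f d c : gadget S f d -> S \subset Crest -> c \in Crest -> c \notin S ->
  exists f' d', gadget (c |: S) f' d'.
Proof.
move=> gS SC cC cS; have S_small := card_Crest_sub SC; set Used := f @: gadget_dom S.
have Used_small : (#|Used| <= 398)%N.
  apply: leq_trans (leq_imset_card _ _) _; apply: leq_trans (card_gadget_dom S) _.
  by move: S_small; clear; lia.
have [x [z [xz_edge]]] := exists_edge_good_for_hub c Used_small.
rewrite !inE !negb_or => /andP [/andP [xVbar xUsed] x_good] /andP [/andP [zVbar zUsed] _].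
set F := Vbar :|: Used :|: [set x; z].
have F_small : (#|F| <= #|Vbar| + 400)%N.
  have := leq_card_setU3 Vbar Used [set x; z]; have := cards2 x z; have := leq_b1 (x != z).
  by rewrite -/F; move: Used_small; clear; lia.
have [dc] := exists_good_colour_avoiding x_good (card_forbidden_colours d (col h) (col x)
  S_small F_small).
rewrite inE => /andP [/subsetP nbhd_V0 dc_D0].
rewrite !inE !negb_or => /andP [/andP [/andP [/andP [dc_C dc_Cbar] dc_S] dc_hF] dc_xF].
have [u uN] : exists u, u \in nbhd col h dc by apply/card_gt0P; rewrite card_nbhd.
have [w wN wu] := exists_nbhd_neq tf x dc u.
have uF : u \notin F by rewrite (disjointFr (nbhd_disjoint dc_hF) uN).
have wF : w \notin F by rewrite (disjointFr (nbhd_disjoint dc_xF) wN).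
move: uF wF; rewrite !inE !negb_or.
move=> /and3P [/andP [uVbar uUsed] ux uz] /and3P [/andP [wVbar wUsed] wx wz].
exists (fun q : 'I_k * 'I_4 => if q.1 == c then nth x [:: x; z; u; w] q.2 else f q).
exists (fun e => if e == c then dc else d e).
apply: gadget_extend => //.
- by move: cC; rewrite !inE => /andP [].
- move: xz_edge; rewrite inE /= => /and4P [_ _ xz _].
  by rewrite /= !inE !negb_or xz !(eq_sym x) ux wx !(eq_sym z) uz wz eq_sym wu.
- by move=> v; rewrite !inE => /or4P [] /eqP ->; rewrite negb_or ?xVbar ?zVbar ?uVbar ?wVbar.
- by apply: nbhd_V0; rewrite inE uN.
- by apply: nbhd_V0; rewrite inE wN orbT.
- exact: nbhd_col uN.
- exact: nbhd_col wN.
- by rewrite inE dc_Cbar.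
Qed.

Lemma gadget_exists : exists f d, gadget Crest f d.
Proof.
suff grow n (S : {set 'I_k}) : S \subset Crest -> #|S| = n -> exists f d, gadget S f d.
  exact: grow (subxx _) erefl.
elim: n S => [|n IH] S SC.
  move/cards0_eq ->; exists (fun q : 'I_k * 'I_4 => if q.2 == slot_x then h else zm), id.
  exact: gadget0.
move=> Sn; have [c cS] : exists c, c \in S by apply/card_gt0P; rewrite Sn.
have SC' : S :\ c \subset Crest := subset_trans (subD1set S c) SC.
have [f [d gS]] : exists f d, gadget (S :\ c) f d.
  by apply: IH SC' _; move: Sn; rewrite (cardsD1 c S) cS => -[].
rewrite -(setD1K cS); apply: gadget_step gS SC' (subsetP SC c cS) _.
by rewrite !inE eqxx.
Qed.

Section Assembly.
Variables (f : 'I_k * 'I_4 -> V) (d : 'I_k -> 'I_k).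
Hypothesis gC : gadget Crest f d.

Definition gadget_X := [set f (c, slot_x) | c in C].
Definition gadget_C := d @: Crest.
Definition gadget_V := [set f q | q in [set q in gadget_dom Crest | q.2 != slot_x]].

Lemma in_Crest c : c \in C -> c != cm -> c \in Crest.
Proof. by rewrite !inE => -> ->. Qed.

Lemma slot_x_dom c : c \in C -> (c, slot_x) \in gadget_dom Crest.
Proof.
move=> cC; rewrite in_gadget_dom /=; have [-> | ncm] := eqVneq c cm.
  by rewrite in_set2 eqxx /= orbT.
by rewrite in_Crest.
Qed.

Lemma gadget_x_in c : c \in C -> f (c, slot_x) \in X :\: Vbar.
Proof.
move=> cC; have [-> | ncm] := eqVneq c cm; last by case: gC => _ _ /(_ c (in_Crest cC ncm)) [].
case: gC => _ [-> _] _ _ _; move: hzm_edge h_fresh; rewrite !inE /= negb_or.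
by case/and4P => -> _ _ _ /andP [-> _].
Qed.

Lemma gadget_sets : [/\ gadget_X \subset X :\: Vbar, gadget_C \subset D0 :\: Cbar &
  gadget_V \subset (V0 :|: Z) :\: Vbar].
Proof.
case: gC => _ [_ fzm] fmem fcol _; split; apply/subsetP.
- by move=> v /imsetP [c cC ->]; apply: gadget_x_in.
- by move=> e /imsetP [c cC ->]; case: (fcol c cC).
move=> v /imsetP [[c i]]; rewrite inE in_gadget_dom /= => /andP [/orP [cC | ci] ix] ->.
  have [_ xz xu xw] := fmem c cC.
  by case/slot_cases: ix => ->; [move: xz | move: xu | move: xw];
    rewrite !inE => /andP [-> ->]; rewrite ?orbT.
move: ci; rewrite !inE => /orP [] /eqP [-> i_eq]; rewrite i_eq ?eqxx // in ix *.
rewrite fzm; move: hzm_edge zm_fresh; rewrite !inE negb_or /=.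
by case/and4P => _ -> _ _ /andP [-> _]; rewrite orbT.
Qed.

Lemma gadget_cards : [/\ #|gadget_X| = #|C|, #|gadget_C| = (#|C| - 1)%N &
  (#|gadget_V| <= 3 * #|C|)%N].
Proof.
case: gC => finj _ _ _ dinj; split.
- rewrite card_in_imset // => c c' cC c'C /finj.
  by move=> /(_ (slot_x_dom cC) (slot_x_dom c'C)) [].
- by rewrite card_in_imset // card_Crest.
apply: leq_trans (leq_imset_card _ _) _.
have sub : [set q in gadget_dom Crest | q.2 != slot_x] \subset
    setX Crest [set~ slot_x] :|: [set (cm, slot_z)].
  apply/subsetP => -[c i]; rewrite inE in_gadget_dom /= => /andP [/orP [cC | ci] ix].
    by rewrite in_setU in_setX cC in_setC1 ix.
  by move: ci; rewrite !inE => /orP [] /eqP [-> i_eq]; rewrite i_eq ?eqxx // in ix *.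
apply: leq_trans (subset_leq_card sub) _; apply: leq_trans (leq_card_setU _ _).1 _.
rewrite cardsX cardsC1 card_ord cards1 card_Crest.
have : (0 < #|C|)%N by apply/card_gt0P; exists cm.
by case: #|C| => // m _; rewrite subn1 /= mulnC mulnS addnC leq_add2r.
Qed.

Section Matching.
Variable c0 : 'I_k.
Hypothesis c0C : c0 \in C.

Definition partner c : 'I_k * 'I_4 :=
  if c == c0 then (c, slot_z) else if c == cm then (c0, slot_u) else (c, slot_w).

Definition matched_colour c := if c == c0 then c0 else d (if c == cm then c0 else c).

Lemma partner_dom c : c \in C -> partner c \in gadget_dom Crest.
Proof.
move=> cC; rewrite /partner in_gadget_dom; have [-> | cc0] := eqVneq c c0.
  have [-> | ncm] := eqVneq c0 cm; last by rewrite /= in_Crest.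
  by rewrite /= in_set2 eqxx !orbT.
have [c_cm | ncm] := eqVneq c cm; last by rewrite /= in_Crest.
by rewrite /= in_Crest // -c_cm eq_sym.
Qed.

Lemma partner_slot c : (partner c).2 != slot_x.
Proof. by rewrite /partner; case: ifP => //; case: ifP. Qed.

Lemma partnerK : cancel partner (fun q => if q.2 == slot_u then cm else q.1).
Proof.
by move=> c; rewrite /partner; case: (eqVneq c c0) => [-> | _] //; case: (eqVneq c cm).
Qed.

Lemma col_partner c : c \in C -> col (f (c, slot_x)) (f (partner c)) = matched_colour c.
Proof.
case: gC => _ [fh fzm] _ fcol _ cC; rewrite /partner /matched_colour.
have [-> | cc0] := eqVneq c c0.
  have [-> | ncm] := eqVneq c0 cm; last by case: (fcol c0 (in_Crest c0C ncm)).
  by rewrite fh fzm; move: hzm_edge; rewrite inE => /and4P [_ _ _ /eqP].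
have [c_cm | ncm] := eqVneq c cm; last by case: (fcol c (in_Crest cC ncm)).
have c0_ncm : c0 != cm by rewrite -c_cm eq_sym.
by rewrite c_cm fh; case: (fcol c0 (in_Crest c0C c0_ncm)).
Qed.

Lemma matched_colour_in c : c \in C -> matched_colour c \in c0 |: gadget_C.
Proof.
move=> cC; rewrite /matched_colour in_setU1.
have [_ | cc0] := eqVneq c c0; first by rewrite eqxx.
apply/orP; right; apply: imset_f.
have [c_cm | ncm] := eqVneq c cm; last exact: in_Crest.
by apply: in_Crest => //; rewrite -c_cm eq_sym.
Qed.

Lemma matched_colour_inj : {in C &, injective matched_colour}.
Proof.
case: gC => _ _ _ fcol dinj.
have sw_Crest c : c \in C -> c != c0 -> (if c == cm then c0 else c) \in Crest.
  move=> cC cc0; have [c_cm | ncm] := eqVneq c cm; last exact: in_Crest.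
  by apply: in_Crest => //; rewrite -c_cm eq_sym.
have d_notin c : c \in C -> c != c0 -> d (if c == cm then c0 else c) != c0.
  move=> cC cc0; case: (fcol _ (sw_Crest c cC cc0)) => _ _ _ _.
  by apply: contraNneq => ->.
move=> c c' cC c'C; rewrite /matched_colour.
have [-> | cc0] := eqVneq c c0; have [-> | c'c0] := eqVneq c' c0 => //.
- by move=> E; move: (d_notin c' c'C c'c0); rewrite -E eqxx.
- by move=> E; move: (d_notin c cC cc0); rewrite E eqxx.
move=> /(dinj _ _ (sw_Crest c cC cc0) (sw_Crest c' c'C c'c0)).
have [-> | ncm] := eqVneq c cm; have [-> | n'cm] := eqVneq c' cm => // E.
- by rewrite E eqxx in c'c0.
- by rewrite -E eqxx in cc0.
Qed.

Lemma partner_pairs_disjoint c c' : c != c' ->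
  [disjoint [set (c, slot_x); partner c] & [set (c', slot_x); partner c']].
Proof.
move=> cc'; apply/pred0P => q /=; rewrite !inE; apply/negP.
case/andP => /orP [] /eqP -> /orP [] /eqP.
- by case=> /eqP; rewrite (negbTE cc').
- by move=> E; have := partner_slot c'; rewrite -E eqxx.
- by move=> E; have := partner_slot c; rewrite E eqxx.
- by move/(can_inj partnerK)/eqP; rewrite (negbTE cc').
Qed.

Lemma gadget_matching : has_perfect_rainbow_matching col (c0 |: gadget_C) gadget_X gadget_V.
Proof.
case: gC => finj _ _ _ _.
apply: (@perfect_rainbow_matching_imset _ _ _ _ _ _ _ C
  (fun c => (f (c, slot_x), f (partner c)))) => /=.
- move=> c cC; apply/and4P; split.
  + exact: imset_f.
  + by apply: imset_f; rewrite inE partner_dom // partner_slot.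
  + rewrite (inj_in_eq finj) ?slot_x_dom ?partner_dom //.
    by apply: contra_neq (partner_slot c) => <-.
  + by rewrite col_partner // matched_colour_in.
- move=> c c' cC c'C cc'; apply: (disjoint_set2_inj finj);
    rewrite ?slot_x_dom ?partner_dom //.
  exact: partner_pairs_disjoint.
- by move=> c c' cC c'C /=; rewrite !col_partner //; apply: matched_colour_inj.
- exact: subxx.
Qed.

End Matching.

End Assembly.

Lemma absorber_of_hub : exists X' C' V', absorber X' C' V'.
Proof.
have [f [d gC]] := gadget_exists.
exists (gadget_X f), (gadget_C d), (gadget_V f).
have [? ? ?] := gadget_sets gC; have [? ? ?] := gadget_cards gC.
by split=> // c0 c0C; apply: gadget_matching.
Qed.

End Gadget.

Lemma absorber_exists : exists X' C' V', absorber X' C' V'.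
Proof.
have [C0 | [cm cmC]] := set_0Vmem C.
  exists set0, set0, set0; rewrite /absorber C0.
  by split; rewrite ?sub0set ?cards0 // => c; rewrite inE.
have [h [zm [hzm hB zmB]]] := exists_hub_edge cm.
exact: absorber_of_hub hzm hB zmB.
Qed.

End Construction.

Lemma beta_small (R : realType) (xi mu beta : R) : 0 < xi -> 0 < mu -> mu <= 1 ->
  beta <= Num.min xi mu ^+ 64 / 64%:R -> beta <= xi / 64 /\ beta <= mu ^+ 5 / 64.
Proof.
move=> xi_gt0 mu_gt0 mu_le1 beta_le; set m := Num.min xi mu in beta_le.
have m_gt0 : 0 < m by rewrite lt_min xi_gt0.
have m_le1 : m <= 1 by rewrite ge_min mu_le1 orbT.
have m64_m5 : m ^+ 64 <= m ^+ 5 by rewrite ler_wiXn2l // ltW.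
split; apply: le_trans beta_le _; rewrite ler_wpM2r ?invr_ge0 ?ler0n //.
- apply: le_trans m64_m5 _; apply: (@le_trans _ _ m).
    by rewrite -[X in _ <= X]expr1 ler_wiXn2l // ltW.
  by rewrite ge_min lexx.
- apply: le_trans m64_m5 _; apply: lerXn2r; rewrite ?nnegrE ?(ltW m_gt0) ?(ltW mu_gt0) //.
  by rewrite ge_min lexx orbT.
Qed.

Lemma exists_nat_gt (R : realType) (c : R) : exists n0 : nat, forall n, (n0 <= n)%N -> c < n%:R.
Proof.
exists (Num.truncn c).+1 => n n0n.
by apply: lt_le_trans (truncnS_gt c) _; rewrite ler_nat.
Qed.

(* [9 * 4096 = 3 ^ 2 * 32 * 128], from [(2n + 1)^2 <= 9 n^2] in Markov's bound. *)
Lemma few_bad_pairs_whp (R : realType) (xi mu eps : R) (n : nat)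
    (col : 'I_(2*n+1) -> 'I_(2*n+1) -> 'I_n) :
  two_factorization col -> 0 < xi -> 0 < mu -> mu <= 1 -> 0 < eps -> (0 < n)%N ->
  9 * 4096 / (mu ^+ 10 * xi ^+ 2 * eps) < n%:R ->
  \sum_(p in [set p | xi ^+ 2 / 128 * n%:R ^+ 2 < (nbad col mu p)%:R]) pair_weight mu p
    <= eps.
Proof.
move=> tf xi_gt0 mu_gt0 mu_le1 eps_gt0 n_gt0 n_large.
have t_gt0 : 0 < xi ^+ 2 / 128 * n%:R ^+ 2 by rewrite mulr_gt0 ?divr_gt0 ?exprn_gt0 ?ltr0n.
have w_ge0 (p : {set 'I_(2*n+1)} * {set 'I_n}) : 0 <= pair_weight mu p.
  exact: pair_weight_ge0 (ltW mu_gt0) mu_le1.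
apply: le_trans (markov w_ge0 (f := fun p => (nbad col mu p)%:R) t_gt0 _) _.
  by move=> p; rewrite ler0n.
rewrite ler_pdivrMr //; apply: le_trans (expect_nbad tf mu_gt0 mu_le1 n_gt0) _.
rewrite card_ord natrD natrM; set N := n%:R in n_large t_gt0 *.
have N1 : 1 <= N by rewrite ler1n.
have m_gt0 : 0 < mu ^+ 10 by rewrite exprn_gt0.
have x_gt0 : 0 < xi ^+ 2 by rewrite exprn_gt0.
move: n_large; rewrite ltr_pdivrMr ?mulr_gt0 // => n_large.
rewrite mulrA ler_pdivrMr ?mulr_gt0 ?(lt_le_trans _ N1) //.
have -> : eps * (xi ^+ 2 / 128 * N ^+ 2) * (N * mu ^+ 10) =
  N * (mu ^+ 10 * xi ^+ 2 * eps) * N ^+ 2 / 128 by field.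
have : 9 * 4096 * N ^+ 2 <= N * (mu ^+ 10 * xi ^+ 2 * eps) * N ^+ 2.
  by rewrite ler_pM2r ?exprn_gt0 ?(lt_le_trans _ N1) // ltW.
nra.
Qed.

Theorem lemma4p1 (R : realType) :
  exists K : nat, (0 < K)%N /\
  forall xi mu beta : R, 0 < xi -> 0 < mu -> mu <= 1 -> 0 < beta ->
    beta <= (Num.min xi mu) ^+ K / K%:R ->
    forall eps : R, 0 < eps ->
    exists n0 : nat, forall n : nat, (n0 <= n)%N ->
    forall col : 'I_(2*n+1) -> 'I_(2*n+1) -> 'I_n, two_factorization col ->
    exists B : {set {set 'I_(2*n+1)} * {set 'I_n}},
      \sum_(p in B) (rand_weight mu p.1 * rand_weight mu p.2) <= eps /\
      forall (V0 : {set 'I_(2*n+1)}) (D0 : {set 'I_n}),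
        (V0, D0) \notin B -> good_event col beta xi V0 D0.
Proof.
exists 64%N; split=> // xi mu beta xi_gt0 mu_gt0 mu_le1 _.
move=> /(beta_small xi_gt0 mu_gt0 mu_le1) [beta_xi beta_mu] eps eps_gt0.
have mu5_gt0 : 0 < mu ^+ 5 by rewrite exprn_gt0.
set A := 9 * 4096 / (mu ^+ 10 * xi ^+ 2 * eps).
have A_gt0 : 0 < A by rewrite divr_gt0 // !mulr_gt0 ?exprn_gt0.
have [n0 n0_large] := exists_nat_gt (4000 / xi + 4000 / mu ^+ 5 + A + 1).
exists n0 => n /n0_large n_large col tf.
have xi_inv_gt0 : 0 < 4000 / xi by rewrite divr_gt0.
have mu_inv_gt0 : 0 < 4000 / mu ^+ 5 by rewrite divr_gt0.
have n_gt0 : (0 < n)%N by rewrite -(ltr0n R); lra.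
have xi_k : 4000 <= xi * n%:R by rewrite mulrC ltW // -ltr_pdivrMr //; lra.
have mu_k : 4000 <= mu ^+ 5 * n%:R by rewrite mulrC ltW // -ltr_pdivrMr //; lra.
exists [set p | xi ^+ 2 / 128 * n%:R ^+ 2 < (nbad col mu p)%:R]; split.
  by apply: few_bad_pairs_whp => //; rewrite -/A; lra.
move=> V0 D0; rewrite inE -leNgt => few C Cbar X Vbar Z Cbar_small Vbar_small C_small _ XZ.
exact: (absorber_exists tf beta_xi beta_mu xi_k mu_k few Cbar_small Vbar_small C_small XZ).
Qed.
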